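(* Let $\widetilde{\mathbf S}=\prod_{i=1}^m\widetilde{\mathbf S}_i$ be a semisimple algebra over an algebraically closed field $\mathbbm k$ with simple components $\widetilde{\mathbf S}_i\cong\mathrm{Mat}(d_i,\mathbbm k)$, and let $\mathbf S=\prod_{k=1}^r\mathbf S_k$ be a subalgebra with $\mathbf S_k\cong\mathbbm k$ and $\operatorname{length}_{\mathbf S}(\widetilde{\mathbf S}\otimes_{\mathbf S}\mathbf S_k)\le2$ for all $1\le k\le r$. Then for each $1\le k\le r$ one of the following holds: (1) $\mathbf S_k=\widetilde{\mathbf S}_i$ for some $i$; (2) $\mathbf S_k\subset\widetilde{\mathbf S}_i\times\widetilde{\mathbf S}_j$ for some $i\ne j$ with $\widetilde{\mathbf S}_i\cong\widetilde{\mathbf S}_j\cong\mathbbm k$, and $\mathbf S_k\cong\mathbbm k$ embeds into $\widetilde{\mathbf S}_i\times\widetilde{\mathbf S}_j\cong\mathbbm k\times\mathbbm k$ diagonally; (3) there is an index $q\ne k$ such that $\mathbf S_k\times\mathbf S_q\subset\widetilde{\mathbf S}_i$ for some $i$ with $\widetilde{\mathbf S}_i\cong\mathrm{Mat}(2,\mathbbm k)$, and this isomorphism can be chosen so that $\mathbf S_k\times\mathbf S_q$ embeds into $\widetilde{\mathbf S}_i$ as the subalgebra of diagonal matrices.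
   Context: Algebras are finite-dimensional over $\mathbbm k$. Here $\mathbf S_k$ is regarded as a (simple) left $\mathbf S$-module, and $\widetilde{\mathbf S}\otimes_{\mathbf S}\mathbf S_k$ as a left $\mathbf S$-module by restriction. *)

From HB Require Import structures.
From mathcomp Require Import all_boot all_order all_algebra.
Set Implicit Arguments. Unset Strict Implicit. Unset Printing Implicit Defensive.
Import GRing.Theory.
Local Open Scope ring_scope.

(* Concrete model of the semisimple algebra  Stil = prod_{i<m} Mat(d_i, K):
   block-diagonal matrices of size \sum_i d_i, the i-th diagonal block being
   the i-th component Mat(d_i, K). *)

Definition Stil_of (K : fieldType) (m : nat) (d : 'I_m -> nat)
  (A : 'M[K]_(\sum_(i < m) d i)) : Prop :=
  exists B : forall i : 'I_m, 'M[K]_(d i), A = mxdiag B.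
Arguments Stil_of {K m} d A.

Definition Stil_comp (K : fieldType) (m : nat) (d : 'I_m -> nat) (i : 'I_m)
  (A : 'M[K]_(\sum_(i < m) d i)) : Prop :=
  exists B : forall l : 'I_m, 'M[K]_(d l),
    (forall l, l != i -> B l = 0) /\ A = mxdiag B.
Arguments Stil_comp {K m} d i A.

(* The subalgebra S = prod_{k<r} S_k, S_k = K e_k, given by its primitive
   idempotents e_k (S is unital in Stil). *)
Definition S_of (K : fieldType) (n r : nat) (e : 'I_r -> 'M[K]_n)
  (s : 'M[K]_n) : Prop :=
  exists c : 'I_r -> K, s = \sum_(l < r) c l *: e l.
Arguments S_of {K n r} e s.

Definition S_comp (K : fieldType) (n r : nat) (e : 'I_r -> 'M[K]_n) (k : 'I_r)
  (s : 'M[K]_n) : Prop :=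
  exists c : K, s = c *: e k.
Arguments S_comp {K n r} e k s.

(* The left S-module  Stil (x)_S S_k, identified with Stil e_k. *)
Definition tensor_Sk (K : fieldType) (m : nat) (d : 'I_m -> nat) (r : nat)
  (e : 'I_r -> 'M[K]_(\sum_(i < m) d i)) (k : 'I_r)
  (x : 'M[K]_(\sum_(i < m) d i)) : Prop :=
  exists a, Stil_of d a /\ x = a *m e k.
Arguments tensor_Sk {K m d r} e k x.

Definition is_submodule (K : fieldType) (n : nat) (S : 'M[K]_n -> Prop)
  (M N : 'M[K]_n -> Prop) : Prop :=
  [/\ (forall x, N x -> M x), N 0,
      (forall x y, N x -> N y -> N (x + y)) &
      (forall s x, S s -> N x -> N (s *m x))].
Arguments is_submodule {K n} S M N.

Definition length_le (K : fieldType) (n : nat) (S : 'M[K]_n -> Prop)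
  (M : 'M[K]_n -> Prop) (t : nat) : Prop :=
  forall (u : nat) (N : nat -> 'M[K]_n -> Prop),
    (forall j, (j <= u)%N -> is_submodule S M (N j)) ->
    (forall j, (j < u)%N ->
       (forall x, N j x -> N j.+1 x) /\ exists x, N j.+1 x /\ ~ N j x) ->
    (u <= t)%N.
Arguments length_le {K n} S M t.

Definition is_alg_iso (K : fieldType) (p q : nat)
  (psi : 'M[K]_p -> 'M[K]_q) : Prop :=
  [/\ bijective psi,
      (forall (a : K) x y, psi (a *: x + y) = a *: psi x + psi y),
      psi 1%:M = 1%:M &
      (forall x y, psi (x *m y) = psi x *m psi y)].
Arguments is_alg_iso {K p q} psi.

From HB Require Import structures.
From mathcomp Require Import all_boot all_order all_algebra.
Set Implicit Arguments. Unset Strict Implicit. Unset Printing Implicit Defensive.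
Import GRing.Theory.
Local Open Scope ring_scope.

(* An element of S acts on M_k = Stil e_k through the coefficients of the
   idempotents e_l, so linearly independent vectors y_1, ..., y_n of M_k with
   e_(l_t) y_t = y_t span a chain of n + 1 distinct S-submodules: length <= 2
   allows at most two of them.  If the diagonal block E of e_k in Mat(d_i) is
   nonzero, the products v rho (v a column fixed by some block of an e_l, rho a
   row of E) give d_i such vectors, and when E = 1 in Mat(2) the three matrix
   units E00, E01, E10 are such vectors.  Hence e_k is either the identity of
   one block with d_i = 1, or the identity of two blocks with d_i = d_j = 1, or
   a rank-one idempotent of a block Mat(2); in the last case the complementary
   rank-one idempotent is the block of some other e_q, and diagonalising the
   pair gives (3). *)

Section BlockDiagonal.
Variables (K : fieldType) (m : nat) (d : 'I_m -> nat).

Lemma mul_mxdiag (B C : forall i, 'M[K]_(d i)) :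
  mxdiag B *m mxdiag C = mxdiag (fun i => B i *m C i).
Proof.
rewrite {1}/mxdiag mul_mxblock_mxdiag /mxdiag; apply/eq_mxblock => i j.
by case: eqVneq => [<-|_]; rewrite ?conform_mx_id ?mul0mx.
Qed.

Lemma scale_mxdiag (c : K) (B : forall i, 'M[K]_(d i)) :
  c *: mxdiag B = mxdiag (fun i => c *: B i).
Proof.
rewrite -mul_scalar_mx -(mxdiagZ (p_ := d)) mul_mxdiag.
by apply/eq_mxdiag => i; rewrite mul_scalar_mx.
Qed.

Lemma mxdiag_eq0 (B : forall i, 'M[K]_(d i)) : mxdiag B = 0 -> forall i, B i = 0.
Proof. by rewrite -(mxdiag0 (p_ := d)) => /eq_mxdiagP. Qed.

Definition block1 (i : 'I_m) (Y : 'M[K]_(d i)) (l : 'I_m) : 'M[K]_(d l) :=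
  if i =P l is ReflectT h then castmx (congr1 d h, congr1 d h) Y else 0.
Arguments block1 : clear implicits.

Lemma block1_id i Y : block1 i Y i = Y.
Proof. by rewrite /block1; case: eqP => // h; rewrite (eq_irrelevance h erefl). Qed.

Lemma block1_neq i Y l : l != i -> block1 i Y l = 0.
Proof. by rewrite /block1; case: eqP => // h; case: l / h; rewrite eqxx. Qed.

Lemma mul_block1 i (F : forall l, 'M[K]_(d l)) (Y : 'M[K]_(d i)) l :
  F l *m block1 i Y l = block1 i (F i *m Y) l.
Proof.
rewrite /block1; case: eqP => [h|_]; last by rewrite mulmx0.
by case: l / h F => F; rewrite !castmx_id.
Qed.

Lemma block1_mul i (F : forall l, 'M[K]_(d l)) (Y : 'M[K]_(d i)) l :
  block1 i Y l *m F l = block1 i (Y *m F i) l.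
Proof.
rewrite /block1; case: eqP => [h|_]; last by rewrite mul0mx.
by case: l / h F => F; rewrite !castmx_id.
Qed.

End BlockDiagonal.
Arguments block1 {K m d} i Y l.

Section EigenvectorChains.
Variables (K : fieldType) (n r : nat) (e : 'I_r -> 'M[K]_n).
Hypothesis e_orth : forall k l, e k *m e l = (if k == l then e k else 0).

Lemma mulmx_comb_eigen (c : 'I_r -> K) l (x : 'M[K]_n) : e l *m x = x ->
  (\sum_l' c l' *: e l') *m x = c l *: x.
Proof.
move=> elx; rewrite mulmx_suml (bigD1 l) //= big1 ?addr0.
  by rewrite -scalemxAl elx.
move=> l' nl'; rewrite -scalemxAl -elx mulmxA e_orth.
by rewrite (negbTE nl') mul0mx scaler0.
Qed.

(* The spans of the first [j] vectors form a chain of submodules, strictly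
   increasing by independence. *)
Lemma eigen_indep_length nn t (M : 'M[K]_n -> Prop)
    (y : 'I_nn -> 'M[K]_n) (l : 'I_nn -> 'I_r) :
  is_submodule (S_of e) M M -> (forall u, M (y u)) ->
  (forall u, e (l u) *m y u = y u) ->
  (forall c : 'I_nn -> K, \sum_u c u *: y u = 0 -> forall u, c u = 0) ->
  length_le (S_of e) M t -> (nn <= t)%N.
Proof.
move=> [_ M0 MD MS] My ey indep hl.
pose span j x := M x /\ exists c : 'I_nn -> K,
  (forall u : 'I_nn, (j <= u)%N -> c u = 0) /\ x = \sum_u c u *: y u.
apply: (hl nn span); rewrite /span.
- move=> j _; split.
  + by move=> x [].
  + split=> //; exists (fun _ => 0); split=> //.
    by rewrite big1 // => u _; rewrite scale0r.
  + move=> x z [Mx [c [c0 xE]]] [Mz [c' [c0' zE]]]; split; first exact: MD.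
    rewrite xE zE; exists (fun u => c u + c' u); split.
      by move=> u ju; rewrite c0 // c0' // addr0.
    by rewrite -big_split; apply: eq_bigr => u _; rewrite scalerDl.
  + move=> s x Ss [Mx [c [c0 xE]]]; split; first exact: MS.
    case: Ss => cs ->; rewrite xE.
    exists (fun u => c u * cs (l u)); split.
      by move=> u ju; rewrite c0 // mul0r.
    rewrite mulmx_sumr; apply: eq_bigr => u _.
    by rewrite -scalemxAr (mulmx_comb_eigen _ (ey u)) scalerA.
- move=> j jnn; split.
    move=> x [Mx [c [c0 xE]]]; split=> //; exists c.
    by split=> // u ju; apply: c0; apply: ltnW.
  pose uj := Ordinal jnn; pose dj (u : 'I_nn) : K := (u == uj)%:R.
  have yjE : y uj = \sum_u dj u *: y u.
    rewrite (bigD1 uj) //= /dj eqxx scale1r big1 ?addr0 //.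
    by move=> u /negbTE ->; rewrite scale0r.
  exists (y uj); split.
    split; first exact: My.
    exists dj; split=> // u ju; rewrite /dj; case: eqP => // uE.
    by move: ju; rewrite uE ltnn.
  move=> [_ [c [c0 yE]]].
  have /indep/(_ uj) : \sum_u (c u - dj u) *: y u = 0.
    by under eq_bigr do rewrite scalerBl; rewrite sumrB -yE -yjE subrr.
  by rewrite c0 //= /dj eqxx sub0r => /eqP; rewrite oppr_eq0 oner_eq0.
Qed.

Lemma eigen_indep3_length (M : 'M[K]_n -> Prop) (y1 y2 y3 : 'M[K]_n)
    (l1 l2 l3 : 'I_r) :
  is_submodule (S_of e) M M -> M y1 -> M y2 -> M y3 ->
  e l1 *m y1 = y1 -> e l2 *m y2 = y2 -> e l3 *m y3 = y3 ->
  (forall c1 c2 c3 : K, c1 *: y1 + c2 *: y2 + c3 *: y3 = 0 ->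
     [/\ c1 = 0, c2 = 0 & c3 = 0]) ->
  ~ length_le (S_of e) M 2.
Proof.
move=> subM M1 M2 M3 e1 e2 e3 indep hl.
suff: (3 <= 2)%N by [].
apply: (eigen_indep_length (y := fun u : 'I_3 => nth y3 [:: y1; y2] u)
  (l := fun u : 'I_3 => nth l3 [:: l1; l2] u) subM _ _ _ hl).
- by move=> [[|[|[|]]] ?].
- by move=> [[|[|[|]]] ?].
- move=> c; rewrite !big_ord_recl big_ord0 addr0 addrA => /indep[c1 c2 c3].
  by move=> [[|[|[|]]] ?] //; [rewrite -c1 | rewrite -c2 | rewrite -c3];
    congr c; apply: val_inj.
Qed.

End EigenvectorChains.

Section FixedRows.
Variable K : fieldType.

(* [rowsub f 1%:M] times its transpose is the identity when [f] is injective. *)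
Lemma row_free_rowsub m1 m2 n (f : 'I_m2 -> 'I_m1) (A : 'M[K]_(m1, n)) :
  injective f -> row_free A -> row_free (rowsub f A).
Proof.
move=> f_inj freeA; rewrite rowsubE /row_free mxrankMfree //.
set X := rowsub f 1%:M.
have XXt : X *m X^T = 1%:M.
  apply/matrixP => i j; rewrite !mxE (bigD1 (f i)) //= big1 ?addr0.
    by rewrite !mxE eqxx mul1r (inj_eq f_inj) eq_sym.
  by move=> k /negbTE nki; rewrite !mxE eq_sym nki mul0r.
by rewrite eqn_leq rank_leq_row -{1}(mxrank1 K m2) -XXt mxrankM_maxl.
Qed.

Variables (r dd : nat) (F : 'I_r -> 'M[K]_dd).
Hypothesis F_sum : \sum_l F l = 1%:M.
Hypothesis F_idem : forall l, F l *m F l = F l.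

(* The rows of all the [F l] together span everything, and each is fixed by
   its own [F l]. *)
Lemma idem_fixed_rows nn : (nn <= dd)%N ->
  exists V : 'M[K]_(nn, dd), row_free V /\
    forall t, exists l, row t V *m F l = row t V.
Proof.
move=> nn_dd.
pose C : 'M[K]_(#|{: 'I_r * 'I_dd}|, dd) :=
  \matrix_(s, j) F (enum_val s).1 (enum_val s).2 j.
have rowC s : row s C = row (enum_val s).2 (F (enum_val s).1).
  by apply/rowP => j; rewrite !mxE.
have C_full : (1%:M <= C)%MS.
  apply/row_subP => p; rewrite -F_sum raddf_sum /=.
  apply: summx_sub => l _.
  have -> : row p (F l) = row (enum_rank (l, p)) C by rewrite rowC enum_rankK.
  exact: row_sub.
have nn_rk : (nn <= \rank C)%N.
  by rewrite (leq_trans nn_dd) // -{1}(mxrank1 K dd) mxrankS.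
exists (rowsub (maxrankfun C \o widen_ord nn_rk) C); split.
  rewrite rowsub_comp row_free_rowsub ?maxrowsub_free //.
  by move=> a b /(congr1 val) /= /val_inj.
move=> t; exists (enum_val (maxrankfun C (widen_ord nn_rk t))).1.
by rewrite row_rowsub rowC -row_mul F_idem.
Qed.

End FixedRows.

Section SmallMatrices.
Variable K : fieldType.

Lemma dim1_scalar_mx n (A : 'M[K]_n) : n = 1%N -> exists c, A = c%:M.
Proof. by move=> n1; subst n; exists (A 0 0); rewrite -mx11_scalar. Qed.

Lemma scalemx_eq0l p q (a : K) (A : 'M[K]_(p, q)) : A != 0 -> a *: A = 0 -> a = 0.
Proof. by move=> A0 /eqP; rewrite scalemx_eq0 (negbTE A0) orbF => /eqP. Qed.

Lemma dim1_idem_eq1 n (A : 'M[K]_n) : n = 1%N -> A *m A = A -> A != 0 -> A = 1%:M.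
Proof.
move=> n1; have [c ->] := dim1_scalar_mx A n1; subst n.
rewrite mul_scalar_mx scale_scalar_mx => /(congr1 (fun B : 'M_1 => B 0 0)).
rewrite !mxE eqxx !mulr1n => cc c0.
have : c * (c - 1) == 0 by rewrite mulrBr mulr1 cc subrr.
rewrite mulf_eq0 subr_eq0 => /orP[/eqP c_eq0|/eqP -> //].
by move: c0; rewrite c_eq0 raddf0 eqxx.
Qed.

Definition unit11 : 'M[K]_(1 + 1) := block_mx 1%:M 0 0 0.
Definition unit22 : 'M[K]_(1 + 1) := block_mx 0 0 0 1%:M.

Lemma unit11_unit22_comb (a b : K) :
  a *: unit11 + b *: unit22 = block_mx a%:M 0 0 b%:M.
Proof.
rewrite !scale_block_mx add_block_mx !scaler0 !addr0 !add0r.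
by rewrite !scalemx1.
Qed.

Lemma is_diag_mx2P (D : 'M[K]_2) :
  is_diag_mx D <-> exists a b, D = a *: unit11 + b *: unit22.
Proof.
split=> [Dd|[a [b ->]]]; last first.
  have := @is_diag_block_mx K 1 1 1 1 a%:M 0 0 b%:M erefl.
  by rewrite unit11_unit22_comb !eqxx !scalar_mx_is_diag => ->.
pose D' : 'M[K]_(1 + 1) := D.
have : is_diag_mx (block_mx (ulsubmx D') (ursubmx D') (dlsubmx D') (drsubmx D')).
  by rewrite submxK.
rewrite is_diag_block_mx // => /and4P[/eqP ur0 /eqP dl0 _ _].
exists (ulsubmx D' 0 0), (drsubmx D' 0 0).
by rewrite unit11_unit22_comb -!mx11_scalar -{1}ur0 -dl0 submxK.
Qed.

Lemma row_mx_eigen_unit (f : 'M[K]_2) (u v : 'cV[K]_2) :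
  f *m u = u -> f *m v = 0 -> u != 0 -> v != 0 ->
  (row_mx u v : 'M[K]_2) \in unitmx.
Proof.
move=> fu fv u0 v0; rewrite -unitmx_tr -row_free_unit.
apply/inj_row_free => x xP.
have : (row_mx u v : 'M[K]_(2, 1 + 1)) *m x^T = 0.
  by rewrite -[LHS]trmxK trmx_mul trmxK xP trmx0.
rewrite -[x^T](@vsubmxK _ 1 1) mul_row_col.
rewrite [usubmx _]mx11_scalar [dsubmx _]mx11_scalar.
rewrite !mul_mx_scalar; set a := _ 0 0; set b := _ 0 0 => uv0.
have a0 : a = 0.
  move/(congr1 (mulmx f)): uv0; rewrite mulmx0 mulmxDr -!scalemxAr fu fv.
  by rewrite scaler0 addr0 => /(scalemx_eq0l u0).
move: uv0; rewrite a0 scale0r add0r => /(scalemx_eq0l v0) b0.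
apply: trmx_inj; rewrite -[x^T](@vsubmxK _ 1 1) trmx0.
rewrite [usubmx _]mx11_scalar [dsubmx _]mx11_scalar -/a -/b a0 b0.
by rewrite !raddf0 col_mx0.
Qed.

Lemma conj_alg_iso n (P : 'M[K]_n) : P \in unitmx ->
  is_alg_iso (fun X => invmx P *m X *m P).
Proof.
move=> Pu; split.
- exists (fun Y => P *m Y *m invmx P) => X.
    by rewrite !mulmxA mulmxV // mul1mx -mulmxA mulmxV // mulmx1.
  by rewrite !mulmxA mulVmx // mul1mx -mulmxA mulVmx // mulmx1.
- by move=> a x y; rewrite mulmxDr mulmxDl -scalemxAr -scalemxAl.
- by rewrite mulmx1 mulVmx.
- by move=> x y; rewrite !mulmxA -(mulmxA _ P) mulmxV // mulmx1.
Qed.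

(* Conjugating by the matrix whose columns are a column of [f] and a column of
   [g] turns [f] and [g] into the two diagonal matrix units. *)
Lemma orth_idem2_diag n (f g : 'M[K]_n) : n = 2%N ->
  f *m f = f -> g *m g = g -> f *m g = 0 -> g *m f = 0 -> f != 0 -> g != 0 ->
  exists psi : 'M[K]_n -> 'M[K]_2, is_alg_iso psi /\
    forall D : 'M[K]_2,
      is_diag_mx D <-> exists a b : K, D = psi (a *: f + b *: g).
Proof.
move=> n2; subst n => ff gg fg gf.
move=> /matrix0Pn[iu [cu fu0]] /matrix0Pn[iv [cv gv0]].
set u := col cu f; set v := col cv g.
have u0 : u != 0 by apply/cV0Pn; exists iu; rewrite mxE.
have v0 : v != 0 by apply/cV0Pn; exists iv; rewrite mxE.
have fu : f *m u = u by rewrite /u !colE mulmxA ff.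
have gv : g *m v = v by rewrite /v !colE mulmxA gg.
have gu : g *m u = 0 by rewrite -fu mulmxA gf mul0mx.
have fv : f *m v = 0 by rewrite -gv mulmxA fg mul0mx.
pose P : 'M[K]_(2, 1 + 1) := row_mx u v.
have fP : f *m P = P *m unit11.
  by rewrite mul_mx_row fu fv /unit11 mul_row_block !mulmx0 !mulmx1 !addr0.
have gP : g *m P = P *m unit22.
  by rewrite mul_mx_row gu gv /unit22 mul_row_block !mulmx0 !mulmx1 !addr0 !add0r.
have Pu : (P : 'M[K]_2) \in unitmx := row_mx_eigen_unit fu fv u0 v0.
exists (fun X => invmx P *m X *m P); split; first exact: conj_alg_iso.
have conjE a b : invmx P *m (a *: f + b *: g) *m P = a *: unit11 + b *: unit22.
  by rewrite mulmxDr mulmxDl -!scalemxAr -!scalemxAl -!mulmxA fP gP !mulKmx.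
move=> D; split=> [/is_diag_mx2P[a [b ->]]|[a [b ->]]].
  by exists a, b; rewrite conjE.
by apply/is_diag_mx2P; exists a, b; rewrite conjE.
Qed.

End SmallMatrices.

Section Decomposition.
Variables (K : fieldType) (m : nat) (d : 'I_m -> nat) (r : nat).
Variable e : 'I_r -> 'M[K]_(\sum_(i < m) d i).
Hypothesis e_Stil : forall k, Stil_of d (e k).
Hypothesis e_orth : forall k l, e k *m e l = (if k == l then e k else 0).
Hypothesis e_sum : \sum_(k < r) e k = 1%:M.

Definition eblock l i : 'M[K]_(d i) := submxblock (e l) i i.

Lemma mxdiag_eblock l : e l = mxdiag (eblock l).
Proof.
rewrite /eblock; case: (e_Stil l) => B ->.
by apply/eq_mxdiag => i; rewrite submxblock_diag.
Qed.

Lemma eblock_orth k l i :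
  eblock k i *m eblock l i = (if k == l then eblock k i else 0).
Proof.
have := e_orth k l; rewrite !mxdiag_eblock mul_mxdiag.
case: eqP => _; first by move/eq_mxdiagP.
by move/mxdiag_eq0.
Qed.

Lemma eblock_idem k i : eblock k i *m eblock k i = eblock k i.
Proof. by rewrite eblock_orth eqxx. Qed.

Lemma eblock_sum i : \sum_l eblock l i = 1%:M.
Proof.
have : mxdiag (fun i => \sum_l eblock l i) =
       mxdiag (fun i => (1%:M : 'M[K]_(d i))).
  rewrite mxdiagZ mxdiag_sum -e_sum.
  by apply: eq_bigr => l _; rewrite mxdiag_eblock.
by move/eq_mxdiagP; apply.
Qed.

Lemma eblock_support k : e k != 0 -> exists i, eblock k i != 0.
Proof.
move=> ek0; apply/existsP; apply: contraNT ek0 => /existsPn E0.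
rewrite mxdiag_eblock -(mxdiag0 (p_ := d)); apply/eqP/eq_mxdiag => i.
by move: (E0 i); rewrite negbK => /eqP.
Qed.

Lemma S_of_Stil s : S_of e s -> Stil_of d s.
Proof.
move=> [c ->]; exists (fun i => \sum_l c l *: eblock l i).
by rewrite mxdiag_sum; apply: eq_bigr => l _; rewrite mxdiag_eblock scale_mxdiag.
Qed.

Lemma tensor_Sk_submodule k :
  is_submodule (S_of e) (tensor_Sk e k) (tensor_Sk e k).
Proof.
split=> //.
- by exists 0; rewrite mul0mx; split=> //; exists (fun _ => 0); rewrite mxdiag0.
- move=> _ _ [a [[B ->] ->]] [a' [[B' ->] ->]]; exists (mxdiag B + mxdiag B').
  by rewrite mulmxDl -mxdiagD; split=> //; exists (fun i => B i + B' i).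
- move=> s _ /S_of_Stil[C ->] [a [[B ->] ->]]; exists (mxdiag C *m mxdiag B).
  by rewrite mulmxA mul_mxdiag; split=> //; exists (fun i => C i *m B i).
Qed.

Definition embed_block i (Y : 'M[K]_(d i)) := mxdiag (block1 i Y).
Arguments embed_block : clear implicits.

Lemma tensor_Sk_embed k i (Y : 'M[K]_(d i)) :
  Y *m eblock k i = Y -> tensor_Sk e k (embed_block i Y).
Proof.
move=> YE; exists (embed_block i Y); split; first by exists (block1 i Y).
rewrite mxdiag_eblock mul_mxdiag; apply/eq_mxdiag => l.
by rewrite block1_mul YE.
Qed.

Lemma eigen_embed l i (Y : 'M[K]_(d i)) :
  eblock l i *m Y = Y -> e l *m embed_block i Y = embed_block i Y.
Proof.
move=> YE; rewrite mxdiag_eblock mul_mxdiag; apply/eq_mxdiag => j.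
by rewrite mul_block1 YE.
Qed.

(* [Y t := v_t *m rho] for independent columns [v_t], each fixed by some
   [eblock l i], and a nonzero row [rho] of [eblock k i]; as [rho] is row free,
   the independence of the [v_t] carries over. *)
Lemma block_eigen_family k i nn : eblock k i != 0 -> (nn <= d i)%N ->
  exists (Y : 'I_nn -> 'M[K]_(d i)) (lab : 'I_nn -> 'I_r),
    [/\ forall t, Y t *m eblock k i = Y t,
        forall t, eblock (lab t) i *m Y t = Y t &
        forall c : 'I_nn -> K, \sum_t c t *: Y t = 0 -> forall t, c t = 0].
Proof.
move=> /matrix0Pn[a [j Eaj]] nn_d.
have trsum : \sum_l (eblock l i)^T = 1%:M.
  by rewrite -raddf_sum /= eblock_sum trmx1.
have tridem l : (eblock l i)^T *m (eblock l i)^T = (eblock l i)^T.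
  by rewrite -trmx_mul eblock_idem.
have [V [Vfree Vfix]] := idem_fixed_rows trsum tridem nn_d.
have Vfix' t : exists l, row t V *m (eblock l i)^T == row t V.
  by have [l /eqP] := Vfix t; exists l.
pose rho := row a (eblock k i).
have rho_free : row_free rho.
  have rho0 : rho != 0 by apply/rV0Pn; exists j; rewrite mxE.
  by rewrite /row_free rank_rV rho0.
exists (fun t => (row t V)^T *m rho), (fun t => xchoose (Vfix' t)); split.
- by move=> t; rewrite -mulmxA -row_mul eblock_idem.
- move=> t; rewrite mulmxA -[eblock _ i]trmxK -trmx_mul.
  by rewrite (eqP (xchooseP (Vfix' t))).
move=> c sum0.
have : ((\row_t c t) *m V)^T *m rho = 0.
  rewrite mulmx_sum_row linear_sum mulmx_suml -[RHS]sum0; apply: eq_bigr => t _.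
  by rewrite linearZ /= -scalemxAl mxE.
move/eqP; rewrite mulmx_free_eq0 // trmx_eq0 mulmx_free_eq0 // => /eqP c0 t.
by have := congr1 (fun w : 'rV[K]_nn => w 0 t) c0; rewrite !mxE.
Qed.

Section BoundedLength.
Variable k : 'I_r.
Hypothesis len_k : length_le (S_of e) (tensor_Sk e k) 2.

Lemma no_three_blocks i1 i2 i3 : i1 != i2 -> i1 != i3 -> i2 != i3 ->
  eblock k i1 != 0 -> eblock k i2 != 0 -> eblock k i3 != 0 -> False.
Proof.
move=> n12 n13 n23 E1 E2 E3.
have n21 : i2 != i1 by rewrite eq_sym.
have n31 : i3 != i1 by rewrite eq_sym.
have n32 : i3 != i2 by rewrite eq_sym.
apply: (eigen_indep3_length e_orth (tensor_Sk_submodule k)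
  (tensor_Sk_embed (eblock_idem k i1)) (tensor_Sk_embed (eblock_idem k i2))
  (tensor_Sk_embed (eblock_idem k i3)) (eigen_embed (eblock_idem k i1))
  (eigen_embed (eblock_idem k i2)) (eigen_embed (eblock_idem k i3)) _ len_k).
move=> c1 c2 c3; rewrite /embed_block !scale_mxdiag -!mxdiagD => /mxdiag_eq0 c0.
have := c0 i1; rewrite block1_id !block1_neq // !scaler0 !addr0.
move=> /(scalemx_eq0l E1) ->.
have := c0 i2; rewrite block1_id !block1_neq // !scaler0 addr0 add0r.
move=> /(scalemx_eq0l E2) ->.
have := c0 i3; rewrite block1_id !block1_neq // !scaler0 !add0r.
by move=> /(scalemx_eq0l E3) ->.
Qed.

Lemma two_blocks_dim1 i j : i != j ->
  eblock k i != 0 -> eblock k j != 0 -> (d i < 2)%N.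
Proof.
move=> nij Ei Ej; rewrite ltnNge; apply/negP => d2.
have [Y [lab [YE labY Yindep]]] := block_eigen_family Ei d2.
have nji : j != i by rewrite eq_sym.
pose o1 : 'I_2 := lift ord0 ord0.
apply: (eigen_indep3_length e_orth (tensor_Sk_submodule k)
  (tensor_Sk_embed (YE ord0)) (tensor_Sk_embed (YE o1))
  (tensor_Sk_embed (eblock_idem k j)) (eigen_embed (labY ord0))
  (eigen_embed (labY o1)) (eigen_embed (eblock_idem k j)) _ len_k).
move=> c1 c2 c3; rewrite /embed_block !scale_mxdiag -!mxdiagD => /mxdiag_eq0 c0.
have := c0 j; rewrite block1_id !block1_neq // !scaler0 !add0r.
move=> /(scalemx_eq0l Ej) c3_0.
have := c0 i; rewrite !block1_id block1_neq // scaler0 addr0 => Yc.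
have := Yindep (fun t => if t == ord0 then c1 else c2).
rewrite !big_ord_recl big_ord0 addr0 /= => /(_ Yc) cE.
by split=> //; [have := cE ord0 | have := cE o1]; rewrite /= ?eqxx.
Qed.

Lemma block_dim_le2 i : eblock k i != 0 -> (d i <= 2)%N.
Proof.
move=> Ei; have [Y [lab [YE labY Yindep]]] := block_eigen_family Ei (leqnn (d i)).
apply: (eigen_indep_length e_orth (tensor_Sk_submodule k)
  (fun t => tensor_Sk_embed (YE t)) (fun t => eigen_embed (labY t)) _ len_k).
move=> c sum0; apply: Yindep.
have : mxdiag (fun j => \sum_t c t *: block1 i (Y t) j) = 0.
  by rewrite mxdiag_sum -[RHS]sum0; apply: eq_bigr => t _; rewrite scale_mxdiag.
move/mxdiag_eq0/(_ i) => sum_i0; rewrite -[RHS]sum_i0.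
by apply: eq_bigr => t _; rewrite block1_id.
Qed.

(* If [eblock k i = 1] in [Mat(2)], the matrix units E00, E01, E10 of block [i]
   are three independent eigenvectors of [tensor_Sk e k]. *)
Lemma dim2_block_neq1 i : d i = 2%N -> eblock k i != 1%:M.
Proof.
move=> d2; apply/eqP => E1.
have [h0 h1] : (0 < d i)%N /\ (1 < d i)%N by rewrite d2.
pose o0 := Ordinal h0; pose o1 := Ordinal h1.
have [n01 n10] : (o0 == o1) = false /\ (o1 == o0) = false by [].
have fixR (Y : 'M[K]_(d i)) : Y *m eblock k i = Y by rewrite E1 mulmx1.
have fixL (Y : 'M[K]_(d i)) : eblock k i *m Y = Y by rewrite E1 mul1mx.
apply: (eigen_indep3_length e_orth (tensor_Sk_submodule k)
  (tensor_Sk_embed (fixR (delta_mx o0 o0)))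
  (tensor_Sk_embed (fixR (delta_mx o0 o1)))
  (tensor_Sk_embed (fixR (delta_mx o1 o0)))
  (eigen_embed (fixL (delta_mx o0 o0))) (eigen_embed (fixL (delta_mx o0 o1)))
  (eigen_embed (fixL (delta_mx o1 o0))) _ len_k).
move=> c1 c2 c3; rewrite /embed_block !scale_mxdiag -!mxdiagD.
move=> /mxdiag_eq0/(_ i); rewrite !block1_id => c0.
have entry a b := congr1 (fun A : 'M[K]_(d i) => A a b) c0.
move: (entry o0 o0) (entry o0 o1) (entry o1 o0).
rewrite !mxE !eqxx n01 n10 /= !mulr1n !mulr0n !mulr0 !mulr1 !addr0 !add0r.
by move=> -> -> ->.
Qed.

End BoundedLength.

Hypothesis d_pos : forall i, (0 < d i)%N.
Hypothesis len_le2 : forall k, length_le (S_of e) (tensor_Sk e k) 2.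

Lemma two_blocks_case k i j : i != j -> eblock k i != 0 -> eblock k j != 0 ->
  [/\ d i = 1%N, d j = 1%N &
      e k = mxdiag (fun l => if (l == i) || (l == j) then 1%:M else 0)].
Proof.
move=> nij Ei Ej; have nji : j != i by rewrite eq_sym.
have dim1 l l' : l != l' -> eblock k l != 0 -> eblock k l' != 0 -> d l = 1%N.
  move=> nll' El El'; apply/eqP; rewrite eqn_leq d_pos andbT -ltnS.
  by have := two_blocks_dim1 (@len_le2 k) nll' El El'.
have [di dj] := (dim1 i j nij Ei Ej, dim1 j i nji Ej Ei).
split=> //; rewrite mxdiag_eblock; apply/eq_mxdiag => l.
have [-> | nli] := eqVneq l i; first exact: dim1_idem_eq1 (eblock_idem k i) Ei.
have [-> | nlj] := eqVneq l j.
  by rewrite orbT; exact: dim1_idem_eq1 (eblock_idem k j) Ej.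
apply/eqP/contraT => El; exfalso.
by apply: (no_three_blocks (@len_le2 k) nij (_ : i != l) (_ : j != l) Ei Ej El);
  rewrite eq_sym.
Qed.

Section OneBlock.
Variables (k : 'I_r) (i : 'I_m).
Hypothesis Ei : eblock k i != 0.
Hypothesis E_other : forall j, j != i -> eblock k j = 0.

Lemma one_block_dim1_case : d i = 1%N ->
  forall A, S_comp e k A <-> Stil_comp d i A.
Proof.
move=> di1 A; have Ei1 := dim1_idem_eq1 di1 (eblock_idem k i) Ei; split.
  move=> [c ->]; exists (fun l => c *: eblock k l); split.
    by move=> l nli; rewrite E_other // scaler0.
  by rewrite mxdiag_eblock scale_mxdiag.
move=> [B [B_other ->]]; have [c Bc] := dim1_scalar_mx (B i) di1.
exists c; rewrite mxdiag_eblock scale_mxdiag; apply/eq_mxdiag => l.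
have [-> | nli] := eqVneq l i; first by rewrite Bc Ei1 scalemx1.
by rewrite B_other // E_other // scaler0.
Qed.

(* Since [eblock k i] is not the whole identity of [Mat(2)], the complementary
   idempotent comes from another [e q], which lives on block [i] only. *)
Lemma one_block_dim2_case : d i = 2%N ->
  exists q, q != k /\ exists Bq : forall l, 'M[K]_(d l),
    [/\ forall l, l != i -> Bq l = 0, e q = mxdiag Bq &
        exists psi : 'M[K]_(d i) -> 'M[K]_2, is_alg_iso psi /\
          forall D : 'M[K]_2, is_diag_mx D <->
            exists a b : K, D = psi (a *: eblock k i + b *: Bq i)].
Proof.
move=> di2.
have [q /andP[nqk Eq] | none] := pickP [pred q | (q != k) && (eblock q i != 0)].
  exists q; split=> //; exists (eblock q); split.
  - move=> l nli; apply/eqP/contraT => El; have nil : i != l by rewrite eq_sym.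
    by have := two_blocks_dim1 (@len_le2 q) nil Eq El; rewrite di2.
  - exact: mxdiag_eblock.
  - apply: orth_idem2_diag di2 (eblock_idem k i) (eblock_idem q i) _ _ Ei Eq.
      by rewrite eblock_orth eq_sym (negbTE nqk).
    by rewrite eblock_orth (negbTE nqk).
have := dim2_block_neq1 (@len_le2 k) di2.
rewrite -(eblock_sum i) (bigD1 k) //= big1 ?addr0 ?eqxx // => q nqk.
by have := none q; rewrite /= nqk => /negbFE/eqP.
Qed.

End OneBlock.

End Decomposition.

Theorem lemma1p9 (K : closedFieldType) (m : nat) (d : 'I_m -> nat)
  (r : nat) (e : 'I_r -> 'M[K]_(\sum_(i < m) d i)) :
  (forall i, (0 < d i)%N) ->
  (forall k, Stil_of d (e k)) ->
  (forall k, e k <> 0) ->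
  (forall k l, e k *m e l = (if k == l then e k else 0)) ->
  \sum_(k < r) e k = 1%:M ->
  (forall k, length_le (S_of e) (tensor_Sk e k) 2) ->
  forall k : 'I_r,
    (* (1) S_k = Stil_i *)
    (exists i : 'I_m,
       forall A, S_comp e k A <-> Stil_comp d i A)
    \/
    (* (2) S_k diagonally embedded in Stil_i x Stil_j = K x K *)
    (exists i j : 'I_m, [/\ i != j, d i = 1%N, d j = 1%N &
       e k = mxdiag (fun l : 'I_m =>
               (if (l == i) || (l == j) then 1%:M else 0 : 'M[K]_(d l)))])
    \/
    (* (3) S_k x S_q inside Stil_i = Mat(2,K) as the diagonal matrices *)
    (exists (q : 'I_r) (i : 'I_m), q != k /\ d i = 2%N /\
       exists (Bk Bq : forall l : 'I_m, 'M[K]_(d l)),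
         [/\ forall l, l != i -> Bk l = 0,
             forall l, l != i -> Bq l = 0,
             e k = mxdiag Bk,
             e q = mxdiag Bq &
             exists psi : 'M[K]_(d i) -> 'M[K]_2,
               is_alg_iso psi /\
               forall D : 'M[K]_2,
                 is_diag_mx D <->
                 exists a b : K, D = psi (a *: Bk i + b *: Bq i)]).
Proof.
move=> d_pos e_Stil e_neq0 e_orth e_sum len_le2 k.
have [i Ei] := eblock_support e_Stil (introN eqP (e_neq0 k)).
have [j /andP[nji Ej] | only_i] :=
  pickP [pred j | (j != i) && (eblock e k j != 0)].
  right; left; exists i, j; rewrite eq_sym in nji.
  by have [] := two_blocks_case e_Stil e_orth e_sum d_pos len_le2 nji Ei Ej.
have E_other j : j != i -> eblock e k j = 0.
  by move=> nji; have := only_i j; rewrite /= nji => /negbFE/eqP.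
have : (d i == 1%N) || (d i == 2%N).
  move: (d_pos i) (block_dim_le2 e_Stil e_orth e_sum (len_le2 k) Ei).
  by case: (d i) => [|[|[|]]].
case/orP=> /eqP di.
  by left; exists i; apply: one_block_dim1_case.
have [q [nqk [Bq [Bq_other eqBq iso_q]]]] :=
  one_block_dim2_case e_Stil e_orth e_sum len_le2 Ei di.
right; right; exists q, i; do 2!split=> //; exists (eblock e k), Bq.
by split=> //; exact: mxdiag_eblock.
Qed.
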